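(* Let $r\ge 3$ and let $\mathcal H=(V,E)$ be an $r$-uniform bi-hypergraph with $|V|=2r$. If $|E|<\binom{2r}{r}/2$, then $\mathcal H$ is colorable.
   Context: A bi-hypergraph $\mathcal H=(V,E)$ consists of a finite vertex set $V$ and a set $E$ of subsets of $V$, called edges, with no edge contained in another. It is $r$-uniform if every edge has exactly $r$ elements. A mapping $f:V\to\mathbb N$ is a proper coloring of $\mathcal H$ if $1<|f(e)|<|e|$ for every $e\in E$, where $f(e)=\{f(v):v\in e\}$. $\mathcal H$ is colorable if it has a proper coloring. *)

From mathcomp Require Import all_boot.
Set Implicit Arguments. Unset Strict Implicit. Unset Printing Implicit Defensive.

Definition bihypergraph (V : finType) (E : {set {set V}}) : Prop :=
  forall e1 e2, e1 \in E -> e2 \in E -> e1 \subset e2 -> e1 = e2.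

Definition uniform (V : finType) (r : nat) (E : {set {set V}}) : Prop :=
  forall e, e \in E -> #|e| = r.

Definition proper_coloring (V : finType) (E : {set {set V}}) (f : V -> nat) : Prop :=
  forall e, e \in E -> 1 < size (undup [seq f v | v <- enum e]) < #|e|.

Definition colorable (V : finType) (E : {set {set V}}) : Prop :=
  exists f : V -> nat, proper_coloring E f.

From mathcomp Require Import all_boot.

(* Fewer than half of the r-subsets of V are edges, and complementation is a
   bijection on r-subsets (|V| = 2r), so some r-subset S is such that neither
   S nor its complement is an edge.  Colour V by membership in S: an edge e of
   size r different from S and from ~S meets both S and ~S, so it sees exactly
   two colours, and 1 < 2 < r. *)

Lemma exists_set_avoiding_with_complement (V : finType) (E : {set {set V}}) (k : nat) :
  2 * #|E| < 'C(#|V|, k) ->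
  exists S : {set V}, [/\ #|S| = k, S \notin E & ~: S \notin E].
Proof.
move=> hE; suff /existsP [S /and3P [/eqP cS SE CSE]] :
    [exists S : {set V}, [&& #|S| == k, S \notin E & ~: S \notin E]] by exists S.
apply: contraLR hE => /existsPn noS; rewrite -leqNgt -card_draws.
have cover : [set A : {set V} | #|A| == k] \subset E :|: [set ~: A | A in E].
  apply/subsetP => A; rewrite !inE => /eqP cA.
  have := noS A; rewrite cA eqxx /= negb_and !negbK => /orP [-> // | CAE].
  by apply/orP; right; apply/imsetP; exists (~: A); rewrite ?setCK.
apply: leq_trans (subset_leq_card cover) _.
by rewrite mul2n -addnn (leq_trans (leq_card_setU _ _)) ?leq_add ?leq_imset_card.
Qed.

Lemma indicator_colors_split (V : finType) (S e : {set V}) :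
  ~~ (e \subset S) -> ~~ (e \subset ~: S) ->
  size (undup [seq nat_of_bool (v \in S) | v <- enum e]) = 2.
Proof.
move=> /subsetPn [x xe xS] /subsetPn [y ye]; rewrite inE negbK => yS.
apply/anti_leq/andP; split.
  apply: (@uniq_leq_size _ _ [:: 0; 1]) => [|c]; first exact: undup_uniq.
  by rewrite mem_undup => /mapP [v _ ->]; rewrite !inE; case: (v \in S).
apply: (@uniq_leq_size _ [:: 0; 1]) => // c; rewrite !inE mem_undup.
by case/orP => /eqP ->; apply/mapP;
  [exists x | exists y]; rewrite ?mem_enum ?(negbTE xS) ?yS.
Qed.

Lemma not_subset_of_same_size (V : finType) (A B : {set V}) :
  #|B| <= #|A| -> A != B -> ~~ (A \subset B).
Proof. by move=> cBA; apply: contra => sAB; rewrite eqEcard sAB. Qed.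

Theorem mainTheorem8 (r : nat) (V : finType) (E : {set {set V}}) :
  3 <= r -> bihypergraph E -> uniform r E -> #|V| = 2 * r ->
  2 * #|E| < 'C(2 * r, r) -> colorable E.
Proof.
move=> r3 _ unif cardV; rewrite -cardV.
case/exists_set_avoiding_with_complement => S [cS SE CSE].
have cCS : #|~: S| = r by rewrite cardsCs setCK cS cardV mul2n -addnn addnK.
exists (fun v => nat_of_bool (v \in S)) => e eE.
have ce := unif e eE.
have neS : e != S by apply: contraNneq SE => <-.
have neCS : e != ~: S by apply: contraNneq CSE => <-.
rewrite indicator_colors_split ?ce //.
- by apply: not_subset_of_same_size neS; rewrite ce cS.
- by apply: not_subset_of_same_size neCS; rewrite ce cCS.
Qed.
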